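(* Let $\kappa>0$, $a>0$ and $0\le\gamma<\pi/2$. Then there exists a $\kappa$-cylindrical surface over the strip $\Omega=\{(x,y): |x|<a\}$ making contact angle $\gamma$ with the vertical plates $\{x=\pm a\}$. Precisely: there exists $u_0>0$ such that the solution $u=u(r;u_0)$ of $\frac{d}{dr}\big(u'/\sqrt{1+u'^2}\big)=\kappa u$, $u(0)=u_0$, $u'(0)=0$, is defined on $[0,a)$ and $\sin\psi(r)\to\cos\gamma$ as $r\to a$, where $\sin\psi=u'/\sqrt{1+u'^2}$.
   Context: The surface is $z=u(x)$, $(x,y)\in\Omega$, with $u$ even; it solves $\operatorname{div}\big(Du/\sqrt{1+|Du|^2}\big)=\kappa u$ in $\Omega$ and the Young boundary condition $\nu\cdot Du/\sqrt{1+|Du|^2}=\cos\gamma$ on $\partial\Omega$ ($\nu$ the exterior unit normal). *)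

From Stdlib Require Import Reals.
From Coquelicot Require Import Coquelicot.
Open Scope R_scope.

Definition sinpsi (du : R -> R) (r : R) : R := du r / sqrt (1 + (du r)^2).

Definition cyl_solution (kappa u0 a : R) (u du : R -> R) : Prop :=
  u 0 = u0 /\ du 0 = 0 /\
  (forall r, 0 <= r < a ->
     is_derive u r (du r) /\ is_derive (sinpsi du) r (kappa * u r)).

From Stdlib Require Import Reals Ranalysis5 Lra ClassicalEpsilon.
From Coquelicot Require Import Coquelicot.
Open Scope R_scope.

(* Parametrise the meridian by its inclination [psi] instead of by [r]: the equation
   (sin psi)' = kappa u becomes dr/dpsi = cos psi / (kappa u) and du/dpsi = sin psi / (kappa u),
   so u^2 = u0^2 + 2 (1 - cos psi) / kappa, and the radius reached at inclination [psi] is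
   R(u0, psi) = int_0^psi cos t / (kappa u(t)) dt.  With theta = pi/2 - gamma we need
   R(u0, theta) = a.  Now R(., theta) is continuous, at most theta / (kappa u0), and grows like
   log (1 / u0) as u0 -> 0, so the intermediate value theorem provides u0.  Inverting
   r = R(u0, psi) on [-theta, theta] gives the solution u(r) = u(psi(r)) with u'(r) = tan psi(r),
   and psi(r) -> theta as r -> a. *)

Lemma cos_ge_1_sub_sqr_half t : - (PI / 2) <= t <= PI / 2 -> 1 - t ^ 2 / 2 <= cos t.
Proof.
intros Ht; destruct (cos_bound t 0) as [Hc _]; try lra.
replace (1 - t ^ 2 / 2) with (cos_approx t (2 * 0 + 1)); [exact Hc |].
unfold cos_approx, cos_term; simpl; field.
Qed.

Lemma is_RInt_inv_affine c v s d : 0 < c -> 0 < v -> 0 < s -> 0 <= d ->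
  is_RInt (fun t => / (c * (v + s * t))) 0 d ((ln (v + s * d) - ln v) / (c * s)).
Proof.
intros hc hv hs hd.
replace ((ln (v + s * d) - ln v) / (c * s))
  with (minus (ln (v + s * d) / (c * s)) (ln (v + s * 0) / (c * s)))
  by (rewrite Rmult_0_r, Rplus_0_r; unfold minus, plus, opp; simpl; field; lra).
apply (is_RInt_derive (V := R_CompleteNormedModule) (fun t => ln (v + s * t) / (c * s)));
  intros t Ht; rewrite Rmin_left, Rmax_right in Ht by lra; assert (0 < v + s * t) by nra.
- auto_derive; [lra | field; lra].
- apply (ex_derive_continuous (V := R_NormedModule)); auto_derive; nra.
Qed.

Lemma tan_div_sqrt_1_add_sqr y : 0 < cos y -> tan y / sqrt (1 + tan y ^ 2) = sin y.
Proof.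
intros hc.
assert (E : 1 + tan y ^ 2 = (/ cos y) ^ 2).
{ unfold tan; pose proof (sin2_cos2 y) as S; unfold Rsqr in S.
  replace (1 + (sin y / cos y) ^ 2) with ((sin y * sin y + cos y * cos y) * (/ cos y) ^ 2)
    by (field; lra).
  rewrite S; ring. }
rewrite E, sqrt_pow2 by (apply Rlt_le, Rinv_0_lt_compat; lra).
unfold tan; field; lra.
Qed.

Section InverseOn.

Variables (f f' : R -> R) (lo hi : R).
Hypothesis lo_lt_hi : lo < hi.
Hypothesis f_derive : forall x, is_derive f x (f' x).
Hypothesis f'_pos : forall x, lo < x < hi -> 0 < f' x.

Let f_derivable_pt_lim x : derivable_pt_lim f x (f' x).
Proof. apply is_derive_Reals, f_derive. Qed.

Lemma increasing_on x y : lo <= x -> x < y -> y <= hi -> f x < f y.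
Proof.
intros Hx Hxy Hy.
destruct (MVT_cor2 f f' x y Hxy (fun c _ => f_derivable_pt_lim c)) as [c [Hc Hcxy]].
pose proof (f'_pos c ltac:(lra)); nra.
Qed.

Lemma nondecreasing_on x y : lo <= x -> x <= y -> y <= hi -> f x <= f y.
Proof. intros Hx [Hxy | ->] Hy; [apply Rlt_le, increasing_on | right]; auto. Qed.

Let continuity_pt_on x : continuity_pt f x.
Proof. apply derivable_continuous_pt; exists (f' x); apply f_derivable_pt_lim. Qed.

Definition inverse_on (r : R) : R :=
  epsilon (inhabits 0) (fun x => lo <= x <= hi /\ f x = r).

Lemma inverse_on_spec r :
  f lo <= r <= f hi -> lo <= inverse_on r <= hi /\ f (inverse_on r) = r.
Proof.
intros Hr; unfold inverse_on; apply epsilon_spec.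
destruct (f_interv_is_interv f lo hi r lo_lt_hi Hr (fun x _ => continuity_pt_on x)) as [x Hx].
exists x; exact Hx.
Qed.

Lemma inverse_onK x : lo <= x <= hi -> inverse_on (f x) = x.
Proof.
intros Hx.
assert (Hfx : f lo <= f x <= f hi) by (split; apply nondecreasing_on; lra).
destruct (inverse_on_spec _ Hfx) as [Hy Hfy].
destruct (Rtotal_order (inverse_on (f x)) x) as [H | [H | H]]; [| exact H |].
- pose proof (increasing_on _ _ (proj1 Hy) H (proj2 Hx)); lra.
- pose proof (increasing_on _ _ (proj1 Hx) H (proj2 Hy)); lra.
Qed.

Lemma inverse_on_interior r : f lo < r < f hi -> lo < inverse_on r < hi.
Proof.
intros Hr; destruct (inverse_on_spec r ltac:(lra)) as [[H1 H2] Hf].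
split.
- destruct H1 as [H1 | H1]; [exact H1 |]; rewrite <- H1 in Hf; lra.
- destruct H2 as [H2 | H2]; [exact H2 |]; rewrite H2 in Hf; lra.
Qed.

Lemma continuity_pt_inverse_on r : f lo < r < f hi -> continuity_pt inverse_on r.
Proof.
apply (continuity_pt_recip_interv f inverse_on lo hi lo_lt_hi increasing_on).
- intros x H1 H2; unfold comp, id; apply inverse_on_spec; lra.
- intros x H1 H2; apply inverse_on_spec; lra.
- intros x _; apply continuity_pt_on.
Qed.

Lemma is_derive_inverse_on r : f lo < r < f hi -> is_derive inverse_on r (/ f' (inverse_on r)).
Proof.
intros Hr; apply is_derive_Reals.
pose proof (inverse_on_interior r Hr) as Hin.
assert (Hlo : inverse_on (f lo) = lo) by (apply inverse_onK; lra).
assert (Hhi : inverse_on (f hi) = hi) by (apply inverse_onK; lra).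
set (Prf := fun x (_ : inverse_on (f lo) <= x <= inverse_on (f hi)) =>
  exist (fun l => derivable_pt_lim f x l) (f' x) (f_derivable_pt_lim x)).
assert (Hinc : inverse_on (f lo) <= inverse_on r <= inverse_on (f hi)) by lra.
rewrite <- (Rmult_1_l (/ _)).
apply (derivable_pt_lim_recip_interv f inverse_on (f lo) (f hi) r Prf
  (continuity_pt_inverse_on r Hr) ltac:(lra) Hr Hinc).
- intros x Hx; unfold comp, id; apply inverse_on_spec; lra.
- simpl; pose proof (f'_pos _ Hin); lra.
Qed.

Lemma inverse_on_at_left : filterlim inverse_on (at_left (f hi)) (locally hi).
Proof.
apply filterlim_locally; intros eps; pose proof (cond_pos eps) as Heps.
set (t := Rmax lo (hi - eps / 2)).
assert (Ht : lo <= t < hi) by (unfold t; split; [apply Rmax_l | apply Rmax_lub_lt; lra]).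
assert (Hhit : hi - t <= eps / 2) by (pose proof (Rmax_r lo (hi - eps / 2)); unfold t in *; lra).
assert (Hft : f t < f hi) by (apply increasing_on; lra).
assert (Hlot : f lo <= f t) by (apply nondecreasing_on; lra).
exists (mkposreal _ (proj2 (Rlt_0_minus _ _) Hft)); intros r Hr Hrhi; simpl in Hr.
change (Rabs (r - f hi) < f hi - f t) in Hr; apply Rabs_def2 in Hr.
destruct (inverse_on_spec r ltac:(lra)) as [Hin Hf].
assert (t < inverse_on r).
{ destruct (Rlt_le_dec t (inverse_on r)) as [H | H]; [exact H |].
  pose proof (nondecreasing_on _ _ (proj1 Hin) H ltac:(lra)); lra. }
change (Rabs (inverse_on r - hi) < eps); apply Rabs_def1; lra.
Qed.

End InverseOn.

Section Profile.

Variable k : R.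
Hypothesis k_pos : 0 < k.

Definition height (u0 psi : R) : R := sqrt (u0 ^ 2 + 2 / k * (1 - cos psi)).

Definition radius_rate (u0 psi : R) : R := cos psi / (k * height u0 psi).

Definition radius (u0 psi : R) : R := RInt (radius_rate u0) 0 psi.

Lemma height_radicand_ge u0 psi : u0 ^ 2 <= u0 ^ 2 + 2 / k * (1 - cos psi).
Proof.
assert (0 <= 2 / k) by (apply Rlt_le, Rdiv_lt_0_compat; lra).
pose proof (COS_bound psi); nra.
Qed.

Lemma height_ge u0 psi : 0 <= u0 -> u0 <= height u0 psi.
Proof.
intros hu0; unfold height; rewrite <- (sqrt_pow2 u0) at 1 by lra.
apply sqrt_le_1_alt, height_radicand_ge.
Qed.

Lemma height_sqr u0 psi : height u0 psi * height u0 psi = u0 ^ 2 + 2 / k * (1 - cos psi).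
Proof. apply sqrt_sqrt; pose proof (height_radicand_ge u0 psi); nra. Qed.

Lemma height_0 u0 : 0 <= u0 -> height u0 0 = u0.
Proof.
intros hu0; unfold height; rewrite cos_0, Rminus_diag, Rmult_0_r, Rplus_0_r.
apply sqrt_pow2; lra.
Qed.

Section Positive.

Variable u0 : R.
Hypothesis u0_pos : 0 < u0.

Lemma height_pos psi : 0 < height u0 psi.
Proof. pose proof (height_ge u0 psi); lra. Qed.

Lemma is_derive_height psi : is_derive (height u0) psi (sin psi / (k * height u0 psi)).
Proof.
pose proof (height_pos psi); pose proof (height_radicand_ge u0 psi).
unfold height in *; auto_derive.
- nra.
- replace (u0 * (u0 * 1) + 2 / k * (1 + - cos psi)) with (u0 ^ 2 + 2 / k * (1 - cos psi))
    by ring.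
  field; lra.
Qed.

Lemma continuous_radius_rate psi : continuous (radius_rate u0) psi.
Proof.
apply (ex_derive_continuous (V := R_NormedModule)).
pose proof (height_pos psi).
unfold radius_rate; auto_derive; repeat split.
- eexists; apply is_derive_height.
- nra.
Qed.

Lemma ex_RInt_radius_rate a b : ex_RInt (radius_rate u0) a b.
Proof.
apply (ex_RInt_continuous (V := R_CompleteNormedModule)); intros.
apply continuous_radius_rate.
Qed.

Lemma is_derive_radius psi : is_derive (radius u0) psi (radius_rate u0 psi).
Proof.
apply (is_derive_RInt (V := R_CompleteNormedModule) _ _ 0).
- apply filter_forall; intros b; apply RInt_correct, ex_RInt_radius_rate.
- apply continuous_radius_rate.
Qed.

Lemma radius_0 : radius u0 0 = 0.
Proof. apply (RInt_point (V := R_CompleteNormedModule)). Qed.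

Lemma radius_rate_pos psi : - (PI / 2) < psi < PI / 2 -> 0 < radius_rate u0 psi.
Proof.
intros Hpsi; pose proof (height_pos psi); pose proof (cos_gt_0 psi).
apply Rdiv_lt_0_compat; nra.
Qed.

Lemma radius_rate_ge0 psi : - (PI / 2) <= psi <= PI / 2 -> 0 <= radius_rate u0 psi.
Proof.
intros Hpsi; pose proof (height_pos psi); pose proof (cos_ge_0 psi).
apply Rdiv_le_0_compat; nra.
Qed.

Lemma Rabs_radius_rate_le psi : Rabs (radius_rate u0 psi) <= / (k * u0).
Proof.
pose proof (height_ge u0 psi); pose proof (COS_bound psi).
unfold radius_rate; rewrite Rabs_div, (Rabs_pos_eq (k * _)) by nra.
apply Rle_trans with (1 / (k * height u0 psi)).
- apply Rmult_le_compat_r; [apply Rlt_le, Rinv_0_lt_compat; nra | apply Rabs_le; lra].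
- unfold Rdiv; rewrite Rmult_1_l; apply Rinv_le_contravar; nra.
Qed.

Lemma radius_le psi : 0 <= psi -> radius u0 psi <= psi / (k * u0).
Proof.
intros Hpsi; eapply Rle_trans; [apply Rle_abs |].
eapply Rle_trans.
- apply abs_RInt_le_const; [exact Hpsi | apply ex_RInt_radius_rate |].
  intros t _; apply Rabs_radius_rate_le.
- right; unfold Rdiv; ring.
Qed.

End Positive.

Lemma height_lipschitz v w psi : 0 <= v -> 0 <= w ->
  Rabs (height v psi - height w psi) <= Rabs (v - w).
Proof.
intros hv hw.
pose proof (height_ge v psi hv); pose proof (height_ge w psi hw).
pose proof (height_sqr v psi); pose proof (height_sqr w psi).
apply Rabs_le; destruct (Rle_dec v w).
- assert (height v psi <= height w psi) by nra.
  rewrite Rabs_minus_sym, Rabs_pos_eq by lra; split; nra.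
- assert (height w psi <= height v psi) by nra.
  rewrite Rabs_pos_eq by lra; split; nra.
Qed.

Lemma radius_rate_lipschitz m v w psi : 0 < m -> m <= v -> m <= w ->
  Rabs (radius_rate v psi - radius_rate w psi) <= Rabs (v - w) / (k * (m * m)).
Proof.
intros hm hv hw.
pose proof (height_ge v psi ltac:(lra)); pose proof (height_ge w psi ltac:(lra)).
pose proof (height_lipschitz w v psi ltac:(lra) ltac:(lra)) as Hlip.
rewrite (Rabs_minus_sym w v) in Hlip.
pose proof (COS_bound psi).
set (A := height v psi) in *; set (B := height w psi) in *.
assert (E : radius_rate v psi - radius_rate w psi = cos psi * (B - A) / (k * (A * B))).
{ unfold radius_rate; fold A B; field; repeat split; lra. }
assert (0 < k * (A * B)) by (apply Rmult_lt_0_compat; nra).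
rewrite E, Rabs_div, Rabs_mult, (Rabs_pos_eq (k * _)) by lra.
assert (Rabs (cos psi) <= 1) by (apply Rabs_le; lra).
apply Rle_trans with (Rabs (v - w) / (k * (A * B))).
- apply Rmult_le_compat_r; [apply Rlt_le, Rinv_0_lt_compat; nra |].
  pose proof (Rabs_pos (cos psi)); pose proof (Rabs_pos (B - A)); nra.
- apply Rmult_le_compat_l; [apply Rabs_pos |].
  apply Rinv_le_contravar; [apply Rmult_lt_0_compat; nra |].
  apply Rmult_le_compat_l; nra.
Qed.

Lemma radius_lipschitz m v w psi : 0 < m -> m <= v -> m <= w -> 0 <= psi ->
  Rabs (radius v psi - radius w psi) <= psi * (Rabs (v - w) / (k * (m * m))).
Proof.
intros hm hv hw hpsi; unfold radius.
rewrite <- (RInt_minus (V := R_CompleteNormedModule))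
  by (apply ex_RInt_radius_rate; lra).
rewrite <- (Rminus_0_r psi) at 2.
apply abs_RInt_le_const; [exact hpsi | |].
- apply (ex_RInt_minus (V := R_CompleteNormedModule)); apply ex_RInt_radius_rate; lra.
- intros t _; apply radius_rate_lipschitz; assumption.
Qed.

Lemma continuity_pt_radius_u0 v0 psi : 0 < v0 -> 0 <= psi ->
  continuity_pt (fun v => radius v psi) v0.
Proof.
intros hv0 hpsi; apply continuity_pt_filterlim, filterlim_locally; intros eps.
set (m := v0 / 2); set (L := psi / (k * (m * m))).
assert (hm : 0 < m) by (unfold m; lra).
assert (hL : 0 <= L) by (apply Rdiv_le_0_compat; [lra | apply Rmult_lt_0_compat; nra]).
assert (hd : 0 < Rmin m (eps / (L + 1))).
{ apply Rmin_pos; [lra | apply Rdiv_lt_0_compat; [apply cond_pos | lra]]. }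
exists (mkposreal _ hd); intros v Hv; change (Rabs (v - v0) < Rmin m (eps / (L + 1))) in Hv.
change (Rabs (radius v psi - radius v0 psi) < eps).
pose proof (Rmin_l m (eps / (L + 1))); pose proof (Rmin_r m (eps / (L + 1))).
assert (hv : m <= v) by (unfold m in *; apply Rabs_def2 in Hv; lra).
eapply Rle_lt_trans; [apply (radius_lipschitz m); unfold m in *; lra |].
replace (psi * (Rabs (v - v0) / (k * (m * m)))) with (L * Rabs (v - v0))
  by (unfold L; field; split; lra).
apply Rle_lt_trans with ((L + 1) * Rabs (v - v0)); [pose proof (Rabs_pos (v - v0)); nra |].
apply Rlt_le_trans with ((L + 1) * (eps / (L + 1))); [apply Rmult_lt_compat_l; lra |].
right; field; lra.
Qed.

Lemma radius_rate_ge_near_0 v s t : 0 < v -> 0 < s -> / k <= s ^ 2 -> 0 <= t <= 1 ->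
  / (2 * k * (v + s * t)) <= radius_rate v t.
Proof.
intros hv hs hsk Ht; pose proof PI2_1.
pose proof (cos_ge_1_sub_sqr_half t ltac:(lra)) as Hcos.
pose proof (height_pos v hv t) as HU.
assert (HUle : height v t <= v + s * t).
{ unfold height; rewrite <- (sqrt_pow2 (v + s * t)) by nra; apply sqrt_le_1_alt.
  assert (2 / k * (1 - cos t) <= / k * t ^ 2).
  { replace (/ k * t ^ 2) with (2 / k * (t ^ 2 / 2)) by (field; lra).
    apply Rmult_le_compat_l; [apply Rlt_le, Rdiv_lt_0_compat |]; lra. }
  assert (/ k * t ^ 2 <= s ^ 2 * t ^ 2) by (apply Rmult_le_compat_r; nra).
  assert (0 <= v * (s * t)) by (apply Rmult_le_pos; nra).
  nra. }
unfold radius_rate; apply Rle_trans with (/ 2 * / (k * height v t)).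
- rewrite Rmult_assoc, Rinv_mult; apply Rmult_le_compat_l; [lra |].
  apply Rinv_le_contravar; [nra | apply Rmult_le_compat_l; lra].
- unfold Rdiv; apply Rmult_le_compat_r; [apply Rlt_le, Rinv_0_lt_compat; nra | nra].
Qed.

Lemma exists_radius_ge psi a : 0 < psi <= PI / 2 -> exists v, 0 < v /\ a <= radius v psi.
Proof.
intros hpsi.
(* [s] bounds 1 / sqrt k from above, and [v] is chosen so that the logarithmic lower bound
   for the integral over [0, d] equals [a]. *)
set (s := 1 + / k); set (d := Rmin psi 1).
assert (hk' : 0 < / k) by (apply Rinv_0_lt_compat; lra).
assert (hs : 0 < s) by (unfold s; lra).
assert (hsk : / k <= s ^ 2) by (unfold s; nra).
assert (hd : 0 < d) by (unfold d; apply Rmin_pos; lra).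
assert (hd1 : d <= 1) by apply Rmin_r; assert (hdpsi : d <= psi) by apply Rmin_l.
set (v := s * d * exp (- (2 * k * s * a))).
assert (hv : 0 < v).
{ unfold v; pose proof (exp_pos (- (2 * k * s * a))); apply Rmult_lt_0_compat; nra. }
exists v; split; [exact hv |].
set (lower := fun t => / (2 * k * (v + s * t))).
assert (Hlower : is_RInt lower 0 d ((ln (v + s * d) - ln v) / (2 * k * s)))
  by (apply is_RInt_inv_affine; lra).
assert (Hnear : RInt lower 0 d <= RInt (radius_rate v) 0 d).
{ apply RInt_le; [lra | eexists; exact Hlower | apply ex_RInt_radius_rate; exact hv |].
  intros t Ht; apply radius_rate_ge_near_0; lra. }
assert (Hfar : 0 <= RInt (radius_rate v) d psi).
{ apply RInt_ge_0; [lra | apply ex_RInt_radius_rate; exact hv |].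
  intros t Ht; apply radius_rate_ge0; lra. }
assert (Hsplit : RInt (radius_rate v) 0 d + RInt (radius_rate v) d psi = radius v psi)
  by (apply (RInt_Chasles (V := R_CompleteNormedModule)); apply ex_RInt_radius_rate; exact hv).
rewrite (is_RInt_unique _ _ _ _ Hlower) in Hnear.
assert (Hlnv : ln v = ln (s * d) - 2 * k * s * a)
  by (unfold v; rewrite ln_mult, ln_exp by (try apply exp_pos; nra); ring).
assert (ln (s * d) < ln (v + s * d)) by (apply ln_increasing; nra).
assert (a <= (ln (v + s * d) - ln v) / (2 * k * s)).
{ replace ((ln (v + s * d) - ln v) / (2 * k * s))
    with (a + (ln (v + s * d) - ln (s * d)) / (2 * k * s)) by (rewrite Hlnv; field; lra).
  assert (0 <= (ln (v + s * d) - ln (s * d)) / (2 * k * s)) by (apply Rdiv_le_0_compat; nra).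
  lra. }
lra.
Qed.

Lemma exists_radius_eq psi a :
  0 < psi <= PI / 2 -> 0 < a -> exists u0, 0 < u0 /\ radius u0 psi = a.
Proof.
intros hpsi ha.
destruct (exists_radius_ge psi a hpsi) as [v [hv Hv]].
set (w := v + psi / (k * a)).
assert (hq : 0 < psi / (k * a)) by (apply Rdiv_lt_0_compat; nra).
assert (Hw : radius w psi <= a).
{ eapply Rle_trans; [apply radius_le; unfold w; lra |].
  apply Rle_trans with (psi / (k * (psi / (k * a)))); [| right; field; lra].
  apply Rmult_le_compat_l; [lra |].
  apply Rinv_le_contravar; [nra | apply Rmult_le_compat_l; unfold w; lra]. }
destruct (f_interv_is_interv (fun v => - radius v psi) v w (- a)) as [u0 [Hu0 E]].
- unfold w; lra.
- lra.
- intros x Hx; apply continuity_pt_opp, continuity_pt_radius_u0; lra.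
- exists u0; split; lra.
Qed.

Section Construction.

Variables u0 th a : R.
Hypothesis u0_pos : 0 < u0.
Hypothesis th_range : 0 < th <= PI / 2.
Hypothesis radius_th : radius u0 th = a.

Definition inclination : R -> R := inverse_on (radius u0) (- th) th.

Definition profile (r : R) : R := height u0 (inclination r).

Definition slope (r : R) : R := tan (inclination r).

Let radius_rate_pos_on psi : - th < psi < th -> 0 < radius_rate u0 psi.
Proof. intros Hpsi; apply radius_rate_pos; lra. Qed.

Let mth_lt_th : - th < th.
Proof. lra. Qed.

Let radius_derive := is_derive_radius u0 u0_pos.

Lemma radius_opp_neg : radius u0 (- th) < 0.
Proof.
rewrite <- (radius_0 u0).
apply (increasing_on _ (radius_rate u0) (- th) th); try assumption; lra.
Qed.

Let range r := radius u0 (- th) < r < a.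

Lemma range_of_closed r : 0 <= r < a -> range r.
Proof. pose proof radius_opp_neg; unfold range; lra. Qed.

Lemma inclination_interior r : range r -> - th < inclination r < th.
Proof.
intros Hr; apply (inverse_on_interior _ (radius_rate u0)); try assumption.
rewrite radius_th; exact Hr.
Qed.

Lemma cos_inclination_pos r : range r -> 0 < cos (inclination r).
Proof. intros Hr; pose proof (inclination_interior r Hr); apply cos_gt_0; lra. Qed.

Lemma is_derive_inclination r : range r ->
  is_derive inclination r (k * profile r / cos (inclination r)).
Proof.
intros Hr.
replace (k * profile r / cos (inclination r)) with (/ radius_rate u0 (inclination r)).
- apply (is_derive_inverse_on _ (radius_rate u0)); try assumption.
  rewrite radius_th; exact Hr.
- pose proof (cos_inclination_pos r Hr); pose proof (height_pos u0 u0_pos (inclination r)).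
  unfold radius_rate, profile; field; lra.
Qed.

Lemma locally_range r : range r -> locally r range.
Proof. intros Hr; apply (open_and _ _ (open_gt _) (open_lt _)); exact Hr. Qed.

Lemma is_derive_profile r : range r -> is_derive profile r (slope r).
Proof.
intros Hr; pose proof (cos_inclination_pos r Hr).
pose proof (height_pos u0 u0_pos (inclination r)).
replace (slope r) with (scal (k * profile r / cos (inclination r))
  (sin (inclination r) / (k * height u0 (inclination r)))).
- apply (is_derive_comp (height u0));
    [apply is_derive_height, u0_pos | apply is_derive_inclination, Hr].
- unfold scal; simpl; unfold mult; simpl; unfold slope, profile, tan; field; lra.
Qed.

Lemma sinpsi_slope r : range r -> sinpsi slope r = sin (inclination r).
Proof. intros Hr; apply tan_div_sqrt_1_add_sqr, cos_inclination_pos, Hr. Qed.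

Lemma is_derive_sinpsi_slope r : range r -> is_derive (sinpsi slope) r (k * profile r).
Proof.
intros Hr; pose proof (cos_inclination_pos r Hr).
apply (is_derive_ext_loc (fun x => sin (inclination x))).
{ apply (filter_imp range); [| apply locally_range, Hr].
  intros x Hx; symmetry; apply sinpsi_slope, Hx. }
replace (k * profile r) with (scal (k * profile r / cos (inclination r)) (cos (inclination r)))
  by (unfold scal; simpl; unfold mult; simpl; field; lra).
apply (is_derive_comp sin); [apply is_derive_sin | apply is_derive_inclination, Hr].
Qed.

Lemma inclination_0 : inclination 0 = 0.
Proof.
rewrite <- (radius_0 u0) at 1.
apply (inverse_onK _ (radius_rate u0)); try assumption; lra.
Qed.

Lemma cyl_solution_profile : cyl_solution k u0 a profile slope.
Proof.
split; [| split].
- unfold profile; rewrite inclination_0; apply height_0; lra.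
- unfold slope; rewrite inclination_0; apply tan_0.
- intros r Hr; pose proof (range_of_closed r Hr).
  split; [apply is_derive_profile | apply is_derive_sinpsi_slope]; assumption.
Qed.

Lemma sinpsi_slope_at_left : filterlim (sinpsi slope) (at_left a) (locally (sin th)).
Proof.
apply (filterlim_ext_loc (fun r => sin (inclination r))).
- apply (filter_imp range); [intros r Hr; symmetry; apply sinpsi_slope, Hr |].
  unfold at_left, within.
  apply (filter_imp (fun r => radius u0 (- th) < r)); [intros r H1 H2; split; assumption |].
  apply open_gt; rewrite <- radius_th.
  apply (increasing_on _ (radius_rate u0) (- th) th); try assumption; lra.
- apply (filterlim_comp _ _ _ inclination sin _ (locally th)).
  + unfold inclination; rewrite <- radius_th.
    apply (inverse_on_at_left _ (radius_rate u0)); assumption.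
  + apply continuity_pt_filterlim, continuity_sin.
Qed.

End Construction.

End Profile.

Theorem mainTheorem8 (kappa a gamma : R)
  (hk : 0 < kappa) (ha : 0 < a) (hg0 : 0 <= gamma) (hg1 : gamma < PI / 2) :
  exists u0 : R, 0 < u0 /\
    exists u du : R -> R, cyl_solution kappa u0 a u du /\
      filterlim (sinpsi du) (at_left a) (locally (cos gamma)).
Proof.
set (th := PI / 2 - gamma).
assert (hth : 0 < th <= PI / 2) by (unfold th; lra).
destruct (exists_radius_eq kappa hk th a hth ha) as [u0 [hu0 Hu0]].
exists u0; split; [exact hu0 |].
exists (profile kappa u0 th), (slope kappa u0 th); split.
- apply cyl_solution_profile; assumption.
- rewrite <- sin_shift; apply sinpsi_slope_at_left; assumption.
Qed.
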